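(* Let $X\subseteq U$ be a fixed set of $|X|=m$ keys and let $h:U\to[n]$ be a simple tabulation hash function. Then $$\frac{\bigl|\mathbb{E}[|h(X)|]-\mu_0\bigr|}{\mu_0}=\tilde O(n^{-1/c}).$$
   Context: Simple tabulation hashing: the key universe is $U=[u]$, each key $x\in U$ is viewed as a vector $(x[0],\dots,x[c-1])$ of $c=O(1)$ characters from $\Sigma=[u^{1/c}]$; the range is $[n]=[2^r]$. $h(x)=h_0(x[0])\oplus\cdots\oplus h_{c-1}(x[c-1])$ with $h_0,\dots,h_{c-1}:\Sigma\to[2^r]$ independent fully random functions and $\oplus$ bitwise XOR. $\mu_0=n(1-(1-1/n)^m)$. $\tilde O$ hides polylogarithmic factors in $n$; the constant $c$ is fixed. *)

From mathcomp Require Import all_boot all_order all_algebra.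
From mathcomp Require Import reals exp.
Set Implicit Arguments. Unset Strict Implicit. Unset Printing Implicit Defensive.
Import Order.TTheory GRing.Theory Num.Theory.
Local Open Scope ring_scope.

(* A key of U = [sigma^c] viewed as a vector of c characters in Sigma = [sigma]. *)
Definition key (c sigma : nat) := {ffun 'I_c -> 'I_sigma}.

(* A hash value in [n] = [2^r], represented by its r bits. *)
Definition hval (r : nat) := {ffun 'I_r -> bool}.

Definition xorv (r : nat) (a b : hval r) : hval r := [ffun j => a j (+) b j].

Definition tabfun (c sigma r : nat) := {ffun 'I_c -> {ffun 'I_sigma -> hval r}}.

Definition tab_hash (c sigma r : nat) (T : tabfun c sigma r) (x : key c sigma)
  : hval r := \big[@xorv r/[ffun => false]]_(i < c) T i (x i).

(* E[|h(X)|] where the tables are independent, fully random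
   (uniform over all tabulation functions). *)
Definition exp_image (R : realType) (c sigma r : nat) (X : {set key c sigma}) : R :=
  (\sum_(T : tabfun c sigma r) (#|[set tab_hash T x | x in X]|)%:R)
    / (#|{: tabfun c sigma r}|)%:R.

Definition mu0 (R : realType) (n m : nat) : R :=
  n%:R * (1 - (1 - n%:R^-1) ^+ m).

(* Write P(Z) for the probability that a fixed bin receives no key of Z and
   Q(m) = (1 - 1/n)^m, so that E|h(X)| = n (1 - P(X)) and mu0 = n (1 - Q(|X|)).
   Peel off from Z a smallest nonempty coordinate class G = {x in Z | x_i = a};
   since Z lies in the product of its coordinate projections, |G|^c <= |Z|^(c-1).
   All keys of G differ from Z \ G in coordinate i, so re-randomising the entry
   h_i(a) shows that every hash of G is uniform and independent of h(Z \ G).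
   Hence P(Z) = P(Z \ G) (1 - |G|/n) up to the expected number |G|(|G|-1)/n of
   collisions inside G, and the errors add up to |P(Z) - Q(|Z|)| <= b |Z| / n^2
   with b^c <= |Z|^(c-1).  For |Z| <= n log n this is O~(n^(-1/c)) (1 - Q(|Z|));
   larger sets inherit the bound because P is antitone. *)

From mathcomp Require Import all_boot all_order all_algebra.
From mathcomp Require Import reals exp.
From mathcomp Require Import zify ring lra.
Set Implicit Arguments. Unset Strict Implicit. Unset Printing Implicit Defensive.
Import Order.TTheory GRing.Theory Num.Theory.

Section Collisions.
Variables (T U : finType) (f : T -> U).
Implicit Types A B : {set T}.

Definition collisions A :=
  #|[set p : T * T | [&& p.1 \in A, p.2 \in A, p.1 != p.2 & f p.1 == f p.2]]|.

Lemma collisionsS A B : A \subset B -> collisions A <= collisions B.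
Proof.
move=> /subsetP sAB; apply/subset_leq_card/subsetP => p.
by rewrite !inE => /and4P[/sAB-> /sAB-> -> ->].
Qed.

Lemma card_le_imset_collisions A : #|A| <= #|f @: A| + collisions A.
Proof.
elim: {A}_.+1 {-2}A (ltnSn #|A|) => // N IH A ltAN.
have [->|[x xA]] := set_0Vmem A; first by rewrite cards0.
set A' := A :\ x.
have cardA : #|A| = #|A'|.+1 by rewrite (cardsD1 x A) xA.
have IHA' : #|A'| <= #|f @: A'| + collisions A' by apply: IH; rewrite -ltnS -cardA.
have sA'A : A' \subset A by apply: subD1set.
have le_img : #|f @: A'| <= #|f @: A| by apply/subset_leq_card/imsetS.
have le_coll : collisions A' <= collisions A by apply: collisionsS.
suff : (#|f @: A'| < #|f @: A|) || (collisions A' < collisions A).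
  by rewrite cardA; case/orP; lia.
have [/imsetP[y yA' fxy] | fxA'] := boolP (f x \in f @: A'); apply/orP; [right | left].
- apply: proper_card; apply/properP; split.
    by apply/subsetP => p; rewrite !inE => /and4P[/andP[_ ->] /andP[_ ->] -> ->].
  move: yA'; rewrite !inE => /andP[yx yA].
  by exists (x, y); rewrite !inE /= xA yA (eq_sym x) yx fxy ?eqxx.
- apply: proper_card; apply/properP; split; first exact: imsetS.
  by exists (f x); [apply: imset_f | rewrite fxA'].
Qed.

Lemma imset_fresh A B : f @: [set x in B | f x \notin f @: A] = f @: B :\: f @: A.
Proof.
apply/setP => y; apply/imsetP/setDP => [[x + ->] | [/imsetP[x xB ->] fxA]].
  by rewrite inE => /andP[xB fxA]; split=> //; apply: imset_f.
by exists x; rewrite // inE xB.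
Qed.

Lemma card_imsetU A B : #|f @: (A :|: B)| = #|f @: A| + #|f @: B :\: f @: A|.
Proof.
by rewrite imsetU -(cardsID (f @: A) (f @: A :|: f @: B)) setUK setDUl setDv set0U.
Qed.

End Collisions.

Lemma card_sep_sum (T : finType) (A : {set T}) (P : pred T) :
  #|[set x in A | P x]| = \sum_(x in A) P x.
Proof.
rewrite (eq_bigr (fun x => if P x then 1 else 0)); last by move=> x _; case: (P x).
by rewrite -big_mkcondr sum1dep_card; apply: eq_card => x; rewrite !inE.
Qed.

Lemma exists_subset_card (T : finType) (A : {set T}) k :
  k <= #|A| -> exists2 B : {set T}, B \subset A & #|B| = k.
Proof.
case/card_geqP => s [uniq_s size_s sub_sA].
exists [set x in s]; first by apply/subsetP => x; rewrite inE => /sub_sA.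
by rewrite cardsE (card_uniqP uniq_s).
Qed.

Lemma exists_root_floor (e m : nat) :
  exists2 b, b ^ e.+1 <= m ^ e & forall k, k ^ e.+1 <= m ^ e -> k <= b.
Proof.
pose small k := k ^ e.+1 <= m ^ e.
have small0 : exists k, small k by exists 0; rewrite /small exp0n.
have small_le k : small k -> k <= m ^ e.
  by case: k => // k /(leq_trans _); apply; rewrite -{1}(expn1 k.+1) leq_pexp2l.
by have [b] := ex_maxnP small0 small_le; exists b.
Qed.

Section CoordinateClasses.
Variables (I J : finType).
Implicit Types (Z : {set {ffun I -> J}}) (i : I) (a : J).

Definition coord_class Z i a := [set x in Z | x i == a].

Definition coord_img Z i := [set x i | x : {ffun I -> J} in Z].

Lemma card_le_prod_coord_img Z : #|Z| <= \prod_i #|coord_img Z i|.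
Proof.
have -> : \prod_i #|coord_img Z i| =
          #|(family (fun i => mem (coord_img Z i)) : simpl_pred _)|.
  by rewrite card_family foldrE big_map big_enum.
by apply/subset_leq_card/subsetP => x xZ; apply/familyP => i; apply: imset_f.
Qed.

Lemma coord_img_mul_le Z i k :
  (forall a, a \in coord_img Z i -> k <= #|coord_class Z i a|) ->
  #|coord_img Z i| * k <= #|Z|.
Proof.
move=> le_k.
have -> : #|Z| = \sum_(a in coord_img Z i) #|coord_class Z i a|.
  rewrite -sum1_card
    (partition_big (fun x : {ffun I -> J} => x i) (mem (coord_img Z i))) /=;
    last by move=> x xZ; apply: imset_f.
  by apply: eq_bigr => a _; rewrite -sum1_card; apply: eq_bigl => x; rewrite inE.
by rewrite -sum_nat_const; apply: leq_sum.
Qed.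

Lemma coord_class_sub Z i a : coord_class Z i a \subset Z.
Proof. by apply/subsetP => x /setIdP[]. Qed.

Lemma setD_coord_classU Z i a : (Z :\: coord_class Z i a) :|: coord_class Z i a = Z.
Proof. by apply/setP => x; rewrite !inE; case: (x \in Z); case: (x i == a). Qed.

Lemma card_setD_coord_class Z i a :
  #|Z| = #|Z :\: coord_class Z i a| + #|coord_class Z i a|.
Proof.
by rewrite -(cardsID (coord_class Z i a) Z) addnC (setIidPr (coord_class_sub _ _ _)).
Qed.

Lemma coord_class_sep Z i a x y :
  x \in coord_class Z i a -> y \in Z :\: coord_class Z i a -> y i != x i.
Proof. by move=> /setIdP[_ /eqP->] /setDP[yZ]; rewrite inE yZ. Qed.

Lemma exists_small_coord_class Z : 0 < #|I| -> Z != set0 ->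
  exists i a, 0 < #|coord_class Z i a| /\
              #|coord_class Z i a| ^ #|I| <= #|Z| ^ #|I|.-1.
Proof.
move=> I_gt0 /set0Pn[x0 x0Z]; have [i0 _] := card_gt0P I_gt0.
pose size_of (p : I * J) := #|coord_class Z p.1 p.2|.
have size0 : 0 < size_of (i0, x0 i0).
  by apply/card_gt0P; exists x0; rewrite inE x0Z eqxx.
case: (@arg_minnP _ (i0, x0 i0) (fun p => 0 < size_of p) size_of size0).
move=> [i a] /= size_ia min_ia; exists i, a; split=> //.
set k := #|coord_class Z i a| in size_ia min_ia *.
have prod_le : #|Z| * k ^ #|I| <= #|Z| ^ #|I|.
  apply: leq_trans (leq_mul (card_le_prod_coord_img Z) (leqnn _)) _.
  rewrite -!prod_nat_const -big_split /=; apply: leq_prod => j _.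
  apply: coord_img_mul_le => _ /imsetP[x xZ ->]; apply: (min_ia (j, x j)).
  by apply/card_gt0P; exists x; rewrite inE xZ eqxx.
have Z_gt0 : 0 < #|Z| by apply/card_gt0P; exists x0.
have splitZ : #|Z| ^ #|I| = #|Z| * #|Z| ^ #|I|.-1 by rewrite -expnS prednK.
by rewrite splitZ leq_pmul2l in prod_le.
Qed.

End CoordinateClasses.

Section Tabulation.
Variables (c sigma r : nat).
Local Notation K := (key c sigma).
Local Notation TF := (tabfun c sigma r).
Local Notation HV := (hval r).
Implicit Types (T : TF) (x y : K) (Z G : {set K}).

Lemma card_hval : #|{: HV}| = 2 ^ r.
Proof. by rewrite card_ffun card_bool card_ord. Qed.

Lemma xorvK (u : HV) : involutive (xorv u).
Proof. by move=> v; apply/ffunP => j; rewrite !ffunE addKb. Qed.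

Lemma tab_hash_bit T x j : tab_hash T x j = \big[addb/false]_(l < c) T l (x l) j.
Proof.
apply: (big_morph (fun h : HV => h j) (id1 := false) (op1 := addb)) => [u v|];
  by rewrite ffunE.
Qed.

Definition img T Z : {set HV} := tab_hash T @: Z.

Lemma card_img_le T Z : #|img T Z| <= 2 ^ r.
Proof. by rewrite -card_hval max_card. Qed.

Definition shift_entry (i : 'I_c) (a : 'I_sigma) (v : HV) T : TF :=
  [ffun l => if l == i then [ffun s => if s == a then xorv (T l s) v else T l s]
             else T l].

Lemma shift_entryK i a v : involutive (shift_entry i a v).
Proof.
move=> T; apply/ffunP => l; rewrite !ffunE; case: eqP => // _.
apply/ffunP => s; rewrite !ffunE; case: eqP => // _.
by apply/ffunP => j; rewrite !ffunE addbK.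
Qed.

Lemma tab_hash_shift_other i a v T y : y i != a ->
  tab_hash (shift_entry i a v T) y = tab_hash T y.
Proof.
move=> yia; apply: eq_bigr => l _; rewrite ffunE.
by case: eqP => [->|//]; rewrite ffunE (negbTE yia).
Qed.

Lemma tab_hash_shift i v T x :
  tab_hash (shift_entry i (x i) v T) x = xorv (tab_hash T x) v.
Proof.
apply/ffunP => j; rewrite ffunE !tab_hash_bit (bigD1 i) //= [in RHS](bigD1 i) //=.
rewrite !ffunE eqxx ffunE !eqxx ffunE.
rewrite (eq_bigr (fun l => T l (x l) j)) => [|l /negbTE nli]; last by rewrite ffunE nli.
by rewrite addbAC.
Qed.

(* Shifting the table entry of [x] at a coordinate where [x] differs from all
   of [Z] keeps [img T Z] and moves [tab_hash T x] to any prescribed value, so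
   [tab_hash T x] is uniform and independent of [img T Z]. *)
Lemma sum_hash_notin_img i x Z : {in Z, forall y, y i != x i} ->
  2 ^ r * \sum_(T : TF) (tab_hash T x \notin img T Z) =
  \sum_(T : TF) (2 ^ r - #|img T Z|).
Proof.
move=> sepZ.
have shift_sum v : \sum_(T : TF) (tab_hash T x \notin img T Z) =
                   \sum_(T : TF) (xorv (tab_hash T x) v \notin img T Z).
  rewrite (reindex_inj (inv_inj (shift_entryK i (x i) v))) /=.
  apply: eq_bigr => T _; rewrite tab_hash_shift.
  suff -> : img (shift_entry i (x i) v T) Z = img T Z by [].
  by apply: eq_in_imset => y /sepZ; apply: tab_hash_shift_other.
rewrite -card_hval -sum_nat_const (eq_bigr _ (fun v _ => shift_sum v)) exchange_big.
apply: eq_bigr => T _ /=.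
rewrite (reindex_inj (inv_inj (xorvK (tab_hash T x)))) /=.
under eq_bigr do rewrite xorvK.
by rewrite -big_mkcond sum1_card -(cardC (mem (img T Z))) addKn.
Qed.

Lemma sum_hash_eq x y : x != y ->
  2 ^ r * \sum_(T : TF) (tab_hash T x == tab_hash T y) = #|TF|.
Proof.
move=> xy.
have [i yx_i] : exists i, y i != x i.
  apply/existsP; apply: contraR xy => /existsPn same.
  by apply/eqP/ffunP => i; move/negPn/eqP: (same i) ->.
have sep : {in [set y], forall z : K, z i != x i} by move=> z /set1P->.
have := sum_hash_notin_img sep.
under eq_bigr do rewrite /img imset_set1 inE.
under [X in _ = X]eq_bigr do rewrite /img imset_set1 cards1.
rewrite sum_nat_const.
have split_sum : \sum_(T : TF) (tab_hash T x == tab_hash T y) +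
                 \sum_(T : TF) ~~ (tab_hash T x == tab_hash T y) = #|TF|.
  by rewrite -big_split /= -sum1_card; apply: eq_bigr => T _; case: eqP.
have pos : 0 < 2 ^ r by rewrite expn_gt0.
move: split_sum; set A := \sum_(T : TF) _; set B := \sum_(T : TF) _ => split_sum eqB.
(* [sum_nat_const] returns [#|xpredT|], which is [#|TF|] only up to conversion. *)
have {}eqB : 2 ^ r * B = #|TF| * (2 ^ r - 1) by exact: eqB.
nia.
Qed.

Lemma sum_card_fresh i G Z :
  (forall x y, x \in G -> y \in Z -> y i != x i) ->
  2 ^ r * \sum_(T : TF) #|[set x in G | tab_hash T x \notin img T Z]| +
  #|G| * \sum_(T : TF) #|img T Z| = #|G| * (2 ^ r * #|TF|).
Proof.
move=> sepGZ.
have img_compl : \sum_(T : TF) (2 ^ r - #|img T Z|) + \sum_(T : TF) #|img T Z| =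
                 2 ^ r * #|TF|.
  rewrite -big_split /= mulnC -sum_nat_const; apply: eq_bigr => T _.
  by rewrite subnK // card_img_le.
rewrite -img_compl mulnDr; congr (_ + _).
under eq_bigr do rewrite card_sep_sum.
rewrite exchange_big big_distrr -sum_nat_const /=.
by apply: eq_bigr => x xG; apply: (sum_hash_notin_img (i := i)) => y; apply: sepGZ.
Qed.

Lemma card_new_img_le T Z G :
  #|img T G :\: img T Z| <= #|[set x in G | tab_hash T x \notin img T Z]| <=
  #|img T G :\: img T Z| + collisions (tab_hash T) G.
Proof.
rewrite /img -imset_fresh leq_imset_card /=.
apply: leq_trans (card_le_imset_collisions (tab_hash T) _) _; rewrite leq_add2l.
by apply: collisionsS; apply/subsetP => x; rewrite inE => /andP[].
Qed.

Lemma sum_collisions G :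
  2 ^ r * \sum_(T : TF) collisions (tab_hash T) G = #|G| * #|G|.-1 * #|TF|.
Proof.
pose D := [set p : K * K | [&& p.1 \in G, p.2 \in G & p.1 != p.2]].
have collE T : collisions (tab_hash T) G =
               \sum_(p in D) (tab_hash T p.1 == tab_hash T p.2).
  by rewrite /collisions -card_sep_sum; apply: eq_card => p; rewrite !inE !andbA.
have cardD : #|D| = #|G| * #|G|.-1.
  rewrite -sum1_card (eq_bigl (fun p => (p.1 \in G) && (p.2 \in G :\ p.1))); last first.
    by move=> [x y]; rewrite !inE /= (eq_sym y); case: (y \in G); rewrite /= ?andbT ?andbF.
  rewrite -(pair_big_dep (fun x => x \in G) (fun x y => y \in G :\ x) (fun _ _ => 1)) /=.
  rewrite -sum_nat_const; apply: eq_bigr => x xG.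
  by rewrite sum1_card (cardsD1 x G) xG.
rewrite (eq_bigr _ (fun T _ => collE T)) exchange_big big_distrr /=.
rewrite (eq_bigr (fun _ => #|TF|)); last first.
  by move=> p; rewrite inE => /and3P[_ _ /sum_hash_eq].
by rewrite sum_nat_const cardD.
Qed.

End Tabulation.

Local Open Scope ring_scope.

Section PowerBounds.
Variable R : realFieldType.
Implicit Types (x : R) (k : nat).

Lemma bernoulli_le x k : 0 <= x <= 1 -> 1 - k%:R * x <= (1 - x) ^+ k.
Proof.
case/andP => x_ge0 x_le1; elim: k => [|k IH]; first by rewrite mul0r subr0 expr0.
have x1 : 0 <= 1 - x by rewrite subr_ge0.
have := ler_wpM2l x1 IH; rewrite exprS -natr1.
have : 0 <= k%:R * x ^+ 2 by rewrite mulr_ge0 ?exprn_ge0.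
nra.
Qed.

Lemma bonferroni_le x k : 0 <= x <= 1 ->
  (1 - x) ^+ k <= 1 - k%:R * x + (k * k.-1)%:R / 2 * x ^+ 2.
Proof.
case/andP => x_ge0 x_le1; elim: k => [|k IH]; first by rewrite !mul0r subr0 addr0 expr0.
have x1 : 0 <= 1 - x by rewrite subr_ge0.
have step := ler_wpM2l x1 IH.
have cube : 0 <= (k * k.-1)%:R / 2 * x ^+ 3 by rewrite mulr_ge0 ?divr_ge0 ?exprn_ge0.
have kS : k.+1%:R = k%:R + 1 :> R by rewrite natr1.
have kk : (k.+1 * k.+1.-1)%:R = (k * k.-1)%:R + 2 * k%:R :> R.
  by rewrite -natrM -natrD; congr _%:R; case: k {IH step cube kS} => //= k; lia.
rewrite [(1 - x) ^+ k.+1]exprS kS kk; lra.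
Qed.

Lemma dist_step (P P' Q t y e D : R) :
  0 <= t <= 1 -> 0 <= Q <= 1 -> t <= y <= t + D -> `|P' - Q| <= e ->
  P' * t <= P <= P' * t + D -> `|P - Q * y| <= e + D.
Proof.
move=> /andP[t0 t1] /andP[Q0 Q1] /andP[ty yt] + /andP[lo hi].
rewrite !ler_norml => /andP[lo' hi'].
have D0 : 0 <= D by lra.
have e_t : e * t <= e by rewrite ler_piMr //; lra.
have := ler_wpM2r t0 hi'; have := ler_wpM2r t0 lo'.
have := ler_wpM2l Q0 ty; have := ler_wpM2l Q0 yt; have := ler_piMl D0 Q1.
lra.
Qed.

End PowerBounds.

Section UniformBins.
Variables (R : realType) (r : nat).
Local Notation n := ((2 ^ r)%:R : R).
Local Notation Q m := ((1 - n^-1) ^+ m).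

Lemma n_gt0 : 0 < n. Proof. by rewrite ltr0n expn_gt0. Qed.

Lemma inv_n_01 : 0 <= n^-1 <= 1.
Proof. by rewrite invr_ge0 ltW ?n_gt0 //= invf_le1 ?n_gt0 // ler1n expn_gt0. Qed.

Lemma Q_ge0 m : 0 <= Q m.
Proof. by case/andP: inv_n_01 => _ x1; rewrite exprn_ge0 // subr_ge0. Qed.

Lemma Q_le1 m : Q m <= 1.
Proof. by case/andP: inv_n_01 => x0 x1; rewrite exprn_ile1 ?subr_ge0 ?gerBl. Qed.

Lemma Q_mono m1 m2 : (m1 <= m2)%N -> Q m2 <= Q m1.
Proof. by case/andP: inv_n_01 => x0 x1; apply: ler_wiXn2l; rewrite ?subr_ge0 ?gerBl. Qed.

Lemma Q_small m : (m <= 2 ^ r)%N -> m%:R / n <= 2 * (1 - Q m).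
Proof.
move=> m_le; have := bonferroni_le m inv_n_01; case/andP: inv_n_01 => x0 _.
have mx_le1 : m%:R / n <= 1 by rewrite ler_pdivrMr ?n_gt0 // mul1r ler_nat.
have m1x_le1 : (m.-1)%:R / n <= 1.
  by rewrite ler_pdivrMr ?n_gt0 // mul1r ler_nat (leq_trans (leq_pred m)).
have := ler_wpM2l (mulr_ge0 (ler0n _ m) x0) m1x_le1.
rewrite natrM; lra.
Qed.

Lemma Q_half m : (2 ^ r <= m)%N -> Q m <= 2^-1.
Proof.
move=> m_ge; apply: le_trans (Q_mono m_ge) _.
have := bonferroni_le (2 ^ r) inv_n_01; case/andP: inv_n_01 => x0 _.
have -> : ((2 ^ r * (2 ^ r).-1)%:R / 2 * n^-1 ^+ 2 = (1 - n^-1) / 2 :> R).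
  by rewrite natrM -subn1 natrB ?expn_gt0 //; field; rewrite gt_eqF ?n_gt0.
rewrite mulfV ?gt_eqF ?n_gt0 //; lra.
Qed.

Lemma Q_big : Q (2 ^ r * r.+1) <= n^-1 / 2.
Proof.
rewrite exprM; apply: le_trans (_ : (2^-1) ^+ r.+1 <= _).
  by rewrite lerXn2r ?nnegrE ?Q_ge0 ?invr_ge0 // Q_half.
by rewrite exprS mulrC natrX -exprVn.
Qed.

End UniformBins.

Section EmptyBin.
Variables (R : realType) (c sigma r : nat).
Local Notation K := (key c sigma).
Local Notation TF := (tabfun c sigma r).
Local Notation n := ((2 ^ r)%:R : R).
Local Notation N := (#|TF|%:R : R).
Implicit Types (Y Z G : {set K}).

(* By symmetry of the bins, this is the probability that a fixed bin is empty. *)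
Definition empty_prob Z : R := 1 - (\sum_(T : TF) #|img T Z|)%:R / (n * N).

Lemma N_gt0 : 0 < N.
Proof.
by rewrite ltr0n; apply/card_gt0P; exists [ffun _ => [ffun _ => [ffun _ => false]]].
Qed.

Lemma exp_image_empty_prob Z : exp_image R r Z = n * (1 - empty_prob Z).
Proof.
rewrite /exp_image /empty_prob -natr_sum opprB addrC subrK.
by field; rewrite !gt_eqF ?n_gt0 ?N_gt0.
Qed.

Lemma empty_prob_setU i Z G :
  (forall x y, x \in G -> y \in Z -> y i != x i) ->
  empty_prob Z * (1 - #|G|%:R / n) <= empty_prob (Z :|: G) <=
  empty_prob Z * (1 - #|G|%:R / n) + (#|G| * #|G|.-1)%:R / n ^+ 2.
Proof.
(* [Snew] counts the new hash values and [Sfresh] the keys of [G] hashing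
   outside [img T Z]; the two differ by at most the collisions inside [G]. *)
move=> sepGZ.
set k := #|G|.
set S := \sum_(T : TF) #|img T Z|.
set Snew := \sum_(T : TF) #|img T G :\: img T Z|.
set Sfresh := \sum_(T : TF) #|[set x in G | tab_hash T x \notin img T Z]|.
set Scoll := \sum_(T : TF) collisions (tab_hash T) G.
have S_U : \sum_(T : TF) #|img T (Z :|: G)| = (S + Snew)%N.
  by rewrite -big_split /=; apply: eq_bigr => T _; rewrite /img card_imsetU.
have new_le_fresh : (Snew <= Sfresh)%N.
  by apply: leq_sum => T _; case/andP: (card_new_img_le T Z G).
have fresh_le : (Sfresh <= Snew + Scoll)%N.
  by rewrite -big_split /=; apply: leq_sum => T _; case/andP: (card_new_img_le T Z G).
have fresh_sum : n * Sfresh%:R + k%:R * S%:R = k%:R * (n * N).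
  by rewrite -!natrM -natrD (sum_card_fresh r sepGZ).
have coll_sum : n * Scoll%:R = (k * k.-1)%:R * N by rewrite -!natrM sum_collisions.
have nN_gt0 : 0 < n * N by rewrite mulr_gt0 ?n_gt0 ?N_gt0.
have fresh_eq : Sfresh%:R / (n * N) = empty_prob Z * (k%:R / n).
  have -> : Sfresh%:R = k%:R * (n * N - S%:R) / n.
    by rewrite mulrBr -fresh_sum addrK mulrC mulKf // gt_eqF ?n_gt0.
  by rewrite /empty_prob; field; rewrite !gt_eqF ?n_gt0 ?N_gt0.
have coll_eq : Scoll%:R / (n * N) = (k * k.-1)%:R / n ^+ 2.
  have -> : Scoll%:R = (k * k.-1)%:R * N / n.
    by rewrite -coll_sum mulrC mulKf // gt_eqF ?n_gt0.
  by field; rewrite !gt_eqF ?n_gt0 ?N_gt0.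
have new_fresh : Snew%:R / (n * N) <= Sfresh%:R / (n * N).
  by rewrite ler_pM2r ?invr_gt0 // ler_nat.
have fresh_new : Sfresh%:R / (n * N) <= Snew%:R / (n * N) + Scoll%:R / (n * N).
  by rewrite -mulrDl ler_pM2r ?invr_gt0 // -natrD ler_nat.
have U_eq : empty_prob (Z :|: G) = empty_prob Z - Snew%:R / (n * N).
  by rewrite /empty_prob S_U natrD mulrDl opprD addrA.
rewrite U_eq -coll_eq; rewrite fresh_eq in new_fresh fresh_new.
by apply/andP; split; lra.
Qed.

Lemma empty_prob0 : empty_prob set0 = 1.
Proof. by rewrite /empty_prob big1 ?mul0r ?subr0 // => T _; rewrite /img imset0 cards0. Qed.

Lemma empty_probS Y Z : Y \subset Z -> empty_prob Z <= empty_prob Y.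
Proof.
move=> sYZ; rewrite lerB // ler_pM2r ?invr_gt0 ?mulr_gt0 ?n_gt0 ?N_gt0 // ler_nat.
by apply: leq_sum => T _; apply/subset_leq_card/imsetS.
Qed.

Lemma empty_prob_ge0 Z : 0 <= empty_prob Z.
Proof.
rewrite subr_ge0 ler_pdivrMr ?mulr_gt0 ?n_gt0 ?N_gt0 // mul1r -natrM ler_nat.
by rewrite mulnC -sum_nat_const; apply: leq_sum => T _; apply: card_img_le.
Qed.

Lemma empty_prob_le1 Z : empty_prob Z <= 1.
Proof. by rewrite gerBl divr_ge0 // ltW // mulr_gt0 ?n_gt0 ?N_gt0. Qed.

Lemma empty_prob_ge Z : 1 - #|Z|%:R / n <= empty_prob Z.
Proof.
rewrite lerB // ler_pdivrMr ?mulr_gt0 ?n_gt0 ?N_gt0 //.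
have -> : #|Z|%:R / n * (n * N) = (#|TF| * #|Z|)%:R.
  by rewrite natrM; field; rewrite gt_eqF ?n_gt0.
by rewrite ler_nat -sum_nat_const; apply: leq_sum => T _; apply: leq_imset_card.
Qed.

End EmptyBin.

Section EmptyProbEstimate.
Variables (R : realType) (c sigma r : nat).
Hypothesis c_gt0 : (0 < c)%N.
Local Notation K := (key c sigma).
Local Notation n := ((2 ^ r)%:R : R).

Lemma empty_prob_dist (b : nat) (Z : {set K}) : (b <= 2 ^ r)%N ->
  (forall k, k ^ c <= #|Z| ^ c.-1 -> k <= b)%N ->
  `|empty_prob R r Z - (1 - n^-1) ^+ #|Z| | <= (b * #|Z|)%:R / n ^+ 2.
Proof.
move=> b_le; elim: {Z}_.+1 {-2}Z (ltnSn #|Z|) => // M IH Z ltZM le_b.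
have [->|Z_neq0] := eqVneq Z set0.
  by rewrite empty_prob0 cards0 expr0 subrr normr0 muln0 mul0r.
have := @exists_small_coord_class _ _ Z; rewrite card_ord.
case/(_ c_gt0 Z_neq0) => i [a [G_gt0 G_small]].
set G := coord_class Z i a in G_gt0 G_small; set k := #|G| in G_gt0 G_small.
set Z' := Z :\: G; have cardZ : #|Z| = (#|Z'| + k)%N := card_setD_coord_class Z i a.
have IHZ' : `|empty_prob R r Z' - (1 - n^-1) ^+ #|Z'| | <= (b * #|Z'|)%:R / n ^+ 2.
  apply: IH => [|k' /leq_trans small]; first by move: ltZM G_gt0; rewrite cardZ; lia.
  apply/le_b/small; case: c.-1 => [|e]; first by rewrite !expn0.
  by rewrite leq_exp2r // cardZ leq_addr.
have setU := empty_prob_setU R r (@coord_class_sep _ _ Z i a).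
rewrite setD_coord_classU in setU.
have k_le_b : (k <= b)%N by apply: le_b.
have n_ge0 : 0 <= n := ltW (n_gt0 R r).
have x01 := inv_n_01 R r.
have t01 : 0 <= 1 - k%:R / n <= 1.
  have kn_ge0 : 0 <= k%:R / n by rewrite divr_ge0.
  by rewrite subr_ge0 gerBl kn_ge0 ler_pdivrMr ?n_gt0 // mul1r ler_nat (leq_trans k_le_b).
have Q01 : 0 <= (1 - n^-1) ^+ #|Z'| <= 1 by rewrite Q_ge0 Q_le1.
have y_bounds : 1 - k%:R / n <= (1 - n^-1) ^+ k <=
                1 - k%:R / n + (k * k.-1)%:R / n ^+ 2.
  rewrite bernoulli_le //=; apply: le_trans (bonferroni_le k x01) _.
  rewrite lerD2l -exprVn ler_wpM2r ?exprn_ge0 ?invr_ge0 //.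
  by rewrite ler_pdivrMr // ler_peMr // ler1n.
rewrite cardZ exprD; apply: le_trans (dist_step t01 Q01 y_bounds IHZ' setU) _.
rewrite -mulrDl ler_wpM2r ?invr_ge0 ?exprn_ge0 // -natrD ler_nat.
by rewrite mulnDr leq_add2l mulnC leq_mul // (leq_trans (leq_pred k)).
Qed.

End EmptyProbEstimate.

Section RootBound.
Variables (R : realType) (c' r : nat).
Local Notation c := c'.+1.
Local Notation n := ((2 ^ r)%:R : R).
Local Notation w := (powR n (- c%:R^-1)).

Lemma w_gt0 : 0 < w.
Proof. by apply: powR_gt0; apply: n_gt0. Qed.

Lemma w_exp : w ^+ c = n^-1.
Proof.
rewrite -powR_mulrn ?(ltW w_gt0) // -powRrM mulNr mulVf ?pnatr_eq0 //.
by rewrite powR_inv1 // ltW // n_gt0.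
Qed.

Lemma inv_n_le_w : n^-1 <= w.
Proof.
case/andP: (inv_n_01 R r) => x0 x1.
rewrite -(ler_pXn2r (ltn0Sn c')) ?nnegrE ?(ltW w_gt0) // w_exp exprS.
by rewrite ler_piMr ?exprn_ge0 ?exprn_ile1.
Qed.

Lemma scaled_root_le (b m : nat) (s : R) : (b ^ c <= m ^ c')%N -> 1 <= s ->
  m%:R / n <= s -> b%:R / n <= s * w.
Proof.
move=> bm s_ge1 ms.
have s_ge0 : 0 <= s by apply: le_trans s_ge1.
have x0 : 0 <= n^-1 by case/andP: (inv_n_01 R r).
have n_ge0 : 0 <= n := ltW (n_gt0 R r).
rewrite -(ler_pXn2r (ltn0Sn c')) ?nnegrE ?mulr_ge0 ?divr_ge0 ?(ltW w_gt0) //.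
rewrite [leRHS]exprMn w_exp exprMn.
apply: (@le_trans _ _ (m%:R ^+ c' * n^-1 ^+ c)).
  by rewrite ler_wpM2r ?exprn_ge0 // -!natrX ler_nat.
rewrite exprSr mulrA ler_wpM2r // -exprMn.
apply: (@le_trans _ _ (s ^+ c')); last by rewrite ler_weXn2l.
by rewrite lerXn2r ?nnegrE ?mulr_ge0.
Qed.

End RootBound.

Section MainEstimate.
Variables (R : realType) (c' sigma r : nat).
Local Notation c := c'.+1.
Local Notation K := (key c sigma).
Local Notation n := ((2 ^ r)%:R : R).
Local Notation w := (powR n (- c%:R^-1)).
Local Notation t := (r.+1%:R : R).
Local Notation Q m := ((1 - n^-1) ^+ m).
Local Notation P Z := (empty_prob R r (Z : {set K})).
Implicit Types (Y Z : {set K}).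

Lemma t2w_ge0 : 0 <= t ^+ 2 * w.
Proof. by rewrite mulr_ge0 ?exprn_ge0 // ltW // w_gt0. Qed.

Lemma w_le_tw : w <= t * w.
Proof. by rewrite ler_peMl ?ler1n // ltW // w_gt0. Qed.

Lemma tw_le_t2w : t * w <= t ^+ 2 * w.
Proof.
apply: ler_wpM2r; first exact/ltW/w_gt0.
by rewrite expr2 ler_peMr // ler1n.
Qed.

Lemma empty_prob_dist_crude Z : `|P Z - Q #|Z| | <= 2 * (1 - Q #|Z|).
Proof.
have := empty_prob_ge0 R r Z; have := empty_prob_le1 R r Z; have := empty_prob_ge R r Z.
have := Q_ge0 R r #|Z|; have := Q_le1 R r #|Z|.
case: (leqP #|Z| (2 ^ r)) => [/(Q_small R)|/ltnW/(Q_half R)];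
  move: (P Z) (Q #|Z|) (#|Z|%:R / n) => p q u *;
  by rewrite ler_norml; apply/andP; split; lra.
Qed.

Lemma empty_prob_dist_moderate Z : (#|Z| <= 2 ^ r * r.+1)%N ->
  `|P Z - Q #|Z| | <= 2 * (t ^+ 2 * w) * (1 - Q #|Z|).
Proof.
move=> Z_le; set m := #|Z| in Z_le *.
have [b b_small b_max] := exists_root_floor c' m.
have t_ge1 : 1 <= t by rewrite ler1n.
have mn_le_t : m%:R / n <= t by rewrite ler_pdivrMr ?n_gt0 // mulrC -natrM ler_nat.
have bn_le := scaled_root_le b_small t_ge1 mn_le_t.
have crude := empty_prob_dist_crude Z; rewrite -/m in crude.
have Q_le1 := Q_le1 R r m; have Q_ge0 := Q_ge0 R r m.
set q := Q m in Q_le1 Q_ge0 crude *.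
have q2_ge0 : 0 <= 2 * (1 - q) by lra.
have n_ge0 : 0 <= n := ltW (n_gt0 R r).
have bn_ge0 : 0 <= b%:R / n by rewrite divr_ge0.
have mn_ge0 : 0 <= m%:R / n by rewrite divr_ge0.
have -> : 2 * (t ^+ 2 * w) * (1 - q) = t ^+ 2 * w * (2 * (1 - q)) by ring.
case: (leqP b (2 ^ r)) => [b_le | b_gt].
- have := empty_prob_dist R (ltn0Sn c') b_le b_max; rewrite -/m -/q.
  have -> : (b * m)%:R / n ^+ 2 = b%:R / n * (m%:R / n).
    by rewrite natrM expr2 invfM mulrACA.
  move=> /le_trans; apply.
  case: (leqP m (2 ^ r)) => [m_le | m_gt].
  + have bw : b%:R / n <= w.
      by rewrite -[w]mul1r (scaled_root_le b_small) // ler_pdivrMr ?n_gt0 // mul1r ler_nat.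
    apply: le_trans (ler_pM bn_ge0 mn_ge0 bw (Q_small R m_le)) _.
    by apply: ler_wpM2r => //; apply: le_trans w_le_tw tw_le_t2w.
  apply: le_trans (ler_pM bn_ge0 mn_ge0 bn_le mn_le_t) _.
  rewrite mulrAC -expr2 -[leLHS]mulr1; apply: ler_wpM2l; first exact: t2w_ge0.
  by have := Q_half R (ltnW m_gt); rewrite -/q; lra.
- apply: le_trans crude _; rewrite -[leLHS]mul1r; apply: ler_wpM2r => //.
  apply: le_trans tw_le_t2w; apply: le_trans bn_le.
  by rewrite ler_pdivlMr ?n_gt0 // mul1r ler_nat ltnW.
Qed.

Lemma empty_prob_dist_le Z : `|P Z - Q #|Z| | <= 6 * (t ^+ 2 * w) * (1 - Q #|Z|).
Proof.
have A_ge0 := t2w_ge0.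
have QZ_le1 := Q_le1 R r #|Z|.
case: (leqP #|Z| (2 ^ r * r.+1)) => [Z_le | Z_gt].
  apply: le_trans (empty_prob_dist_moderate Z_le) _.
  by apply: ler_wpM2r; rewrite ?subr_ge0 //; apply: ler_wpM2r; rewrite ?ler_nat.
have [Y sYZ cardY] := exists_subset_card (ltnW Z_gt).
have distY := empty_prob_dist_moderate (eq_leq cardY); rewrite cardY in distY.
have PZ_le := empty_probS R r sYZ.
have PZ_ge0 := empty_prob_ge0 R r Z.
have QZ_ge0 := Q_ge0 R r #|Z|.
have QY_ge0 := Q_ge0 R r (2 ^ r * r.+1).
have QY_le := Q_big R r.
have QZ_le := Q_mono R r (ltnW Z_gt).
have x_le_A := le_trans (inv_n_le_w R c' r) (le_trans w_le_tw tw_le_t2w).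
have x_le1 : n^-1 <= 1 by case/andP: (inv_n_01 R r).
have AQY_ge0 := mulr_ge0 A_ge0 QY_ge0.
move: distY; rewrite !ler_norml => /andP[distY1 distY2].
set qZ := Q #|Z| in QZ_ge0 QZ_le1 QZ_le distY1 distY2 *.
set qY := Q (2 ^ r * r.+1) in QY_ge0 QY_le QZ_le AQY_ge0 distY1 distY2.
set x := n^-1 in QY_le x_le_A x_le1.
set A := t ^+ 2 * w in A_ge0 AQY_ge0 distY1 distY2 x_le_A *.
clearbody qZ qY x A.
have QZ_half : qZ <= 2^-1 by lra.
have AQZ_le := ler_wpM2l A_ge0 QZ_half.
by apply/andP; split; lra.
Qed.

End MainEstimate.

Theorem corollary1 (R : realType) (c : nat) (hc : (0 < c)%N) :
  exists C : R, exists k : nat, 0 < C /\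
    forall (sigma r : nat) (X : {set key c sigma}), (0 < #|X|)%N ->
      `|exp_image R r X - mu0 R (2 ^ r) #|X| | / mu0 R (2 ^ r) #|X|
        <= C * (r.+1)%:R ^+ k * powR ((2 ^ r)%:R) (- (c%:R)^-1).
Proof.
case: c hc => // c' _; exists 6, 2%N; split => // sigma r X X_gt0.
have n_gt0 := n_gt0 R r.
have Q_lt1 : (1 - (2 ^ r)%:R^-1) ^+ #|X| < 1 :> R.
  case/andP: (inv_n_01 R r) => x0 x1.
  by rewrite exprn_ilt1 ?subr_ge0 // -?lt0n // gtrBl invr_gt0.
rewrite exp_image_empty_prob /mu0 -mulrBr normrM (ger0_norm (ltW n_gt0)).
rewrite ler_pdivrMr ?mulr_gt0 ?subr_gt0 // mulrCA ler_pM2l // -mulrA.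
by rewrite (addrC 1) addrKA opprK addrC distrC empty_prob_dist_le.
Qed.
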